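(* (1) Let $q,m$ be positive integers with $q<m\le 2q$ and let $s\in\{2,3\}$. Then $K_{2q}^{RT}(2m,s,2ms-3)\le q\,\big(OCAN(3,m,s,2)+CAN(2,m,2)\big)$. (2) Let $q,v\ge2$ and $m,s,t$ be positive integers with $t\ge 2$, $s\le t\le ms$ and $(t-1)q+1\le m\le (t-1)qv$. Then $K_{qv}^{RT}(m,s,ms-t)\le q\,OCAN(t,m,s,v)$.
   Context: For positive integers $m,s$, the RT poset $[m\times s]$ is the set $\{1,\ldots,ms\}$ partitioned into $m$ blocks $B_i=\{is+1,\ldots,(i+1)s\}$; each block is a chain under the usual order of the integers, and elements of different blocks are incomparable. An ideal is a down-closed subset; an anti-ideal is the complement of an ideal; $\langle A\rangle$ denotes the smallest ideal containing $A$. For $x,y\in\mathbb{Z}_q^{ms}$, $d_{RT}(x,y)=|\langle\{i:x_i\neq y_i\}\rangle|$. A code $C\subseteq \mathbb{Z}_q^{ms}$ is an $R$-covering if every $x\in\mathbb{Z}_q^{ms}$ has some $c\in C$ with $d_{RT}(x,c)\le R$; $K_q^{RT}(m,s,R)$ is the smallest size of an $R$-covering. An ordered covering array $OCA(N;t,m,s,v)$ ($2\le t\le ms$) is an $N\times ms$ array over an alphabet of size $v$ with columns labeled by the elements of $[m\times s]$ such that for every anti-ideal $J$ of size $t$, every $t$-tuple over the alphabet appears as a row of the $N\times t$ subarray formed by the columns labeled by $J$; $OCAN(t,m,s,v)$ is the least such $N$. A covering array $CA(N;t,n,v)$ is an $OCA(N;t,n,1,v)$, i.e. an $N\times n$ array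 in which every set of $t$ columns contains every $t$-tuple as a row; $CAN(t,n,v)$ is the least such $N$. *)

From mathcomp Require Import all_boot.

(* The RT poset [m x s] is modelled on the positions 'I_(m*s) (0-based):
   position p (element p+1 of {1..ms}) lies in block p %/ s, and two positions
   are comparable iff they lie in the same block, ordered as integers. *)
Definition rt_le (s : nat) (i j : nat) : bool := (i %/ s == j %/ s) && (i <= j).

Section RT.
Variables (m s : nat).

Definition rt_ideal (A : {set 'I_(m*s)}) : bool :=
  [forall i : 'I_(m*s), forall j : 'I_(m*s), (j \in A) && rt_le s i j ==> (i \in A)].

Definition rt_anti_ideal (J : {set 'I_(m*s)}) : bool := rt_ideal (~: J).

Definition rt_gen (A : {set 'I_(m*s)}) : {set 'I_(m*s)} :=
  \bigcap_(I : {set 'I_(m*s)} | rt_ideal I && (A \subset I)) I.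

Variable q : nat.
Definition rt_dist (x y : {ffun 'I_(m*s) -> 'I_q}) : nat :=
  #|rt_gen [set i | x i != y i]|.

Definition rt_covering (R : nat) (C : {set {ffun 'I_(m*s) -> 'I_q}}) : bool :=
  [forall x : {ffun 'I_(m*s) -> 'I_q}, [exists c in C, rt_dist x c <= R]].
End RT.

Lemma rt_covering_exists q m s R :
  exists n, [exists C : {set {ffun 'I_(m*s) -> 'I_q}},
               rt_covering m s q R C && (#|C| == n)].
Proof.
exists #|[set: {ffun 'I_(m*s) -> 'I_q}]|; apply/existsP; exists setT.
rewrite eqxx andbT; apply/forallP => x; apply/existsP; exists x.
rewrite in_setT /= /rt_dist.
have -> : [set i | x i != x i] = set0 by apply/setP => i; rewrite !inE eqxx.
apply: leq_trans (_ : #|(set0 : {set 'I_(m*s)})| <= R); last by rewrite cards0.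
apply: subset_leq_card; apply: bigcap_inf; rewrite sub0set andbT.
by apply/forallP => i; apply/forallP => j; rewrite inE.
Qed.

Definition K_RT (q m s R : nat) : nat := ex_minn (rt_covering_exists q m s R).

Definition is_OCA (N t m s v : nat)
    (A : {ffun 'I_N -> {ffun 'I_(m*s) -> 'I_v}}) : bool :=
  [forall J : {set 'I_(m*s)}, rt_anti_ideal m s J && (#|J| == t) ==>
     [forall f : {ffun 'I_(m*s) -> 'I_v},
        [exists r : 'I_N, [forall j in J, A r j == f j]]]].

Definition has_OCA (N t m s v : nat) : bool :=
  [exists A : {ffun 'I_N -> {ffun 'I_(m*s) -> 'I_v}}, @is_OCA N t m s v A].

Lemma OCA_exists t m s v : exists N, has_OCA N t m s v.
Proof.
exists #|{: {ffun 'I_(m*s) -> 'I_v}}|; apply/existsP.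
exists [ffun i => enum_val i]; apply/forallP => J; apply/implyP => _.
apply/forallP => f; apply/existsP; exists (enum_rank f).
apply/forall_inP => j _; by rewrite ffunE enum_rankK.
Qed.

Definition OCAN (t m s v : nat) : nat := ex_minn (OCA_exists t m s v).

(* CA(N;t,n,v) is an OCA(N;t,n,1,v), so CAN(t,n,v) = OCAN(t,n,1,v) *)
Definition CAN (t n v : nat) : nat := OCAN t n 1 v.

From mathcomp Require Import all_boot zify.

(* Write a symbol of an alphabet of size q v as k + q a with k < q and a < v,
   and lift every word over the alphabet of size v by each of the q values of
   k.  The block tops of [m x s] are maximal elements, so any set of them is an
   anti-ideal.  For (2), given a word x, since m > (t - 1) q some t block tops
   carry the same low digit k in x; a row of an OCA(t, m, s, v) carries the high
   digits of x on these tops, and its k-lift agrees with x there, hence lies at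
   distance at most ms - t from x.

   For (1), fold block b of [2m x s] onto block b mod m of [m x s].  Three of
   the 2m block tops carry the same low digit in x, and at most two of their
   blocks fold onto the same block.  If the high digits agree whenever two of
   these tops fold together, a row of an OCA(3, m, s, 2) read through the
   folding matches them.  Otherwise the two colliding blocks lie in opposite
   halves and carry different high digits, and a row of a CA(2, m, 2) read
   through the folding, with its bits complemented on the upper half, matches
   them. *)

Set Implicit Arguments.
Unset Strict Implicit.
Unset Printing Implicit Defensive.

Section RTPoset.
Variables m s : nat.

Lemma rt_anti_idealP (J : {set 'I_(m * s)}) :
  reflect (forall i j : 'I_(m * s), i \in J -> rt_le s i j -> j \in J)
          (rt_anti_ideal m s J).
Proof.
apply: (iffP forallP) => [aJ i j iJ le_ij | upJ i].
  apply: contraT => jNJ; have /forallP/(_ j)/implyP := aJ i.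
  by rewrite !inE jNJ le_ij iJ => /(_ isT).
apply/forallP => j; apply/implyP; rewrite !inE => /andP[jNJ le_ij].
by apply: contra jNJ => iJ; apply: upJ le_ij.
Qed.

Lemma rt_dist_anti_ideal q (J : {set 'I_(m * s)}) (x c : {ffun 'I_(m * s) -> 'I_q}) :
  rt_anti_ideal m s J -> {in J, forall j, c j = x j} ->
  rt_dist m s q x c <= m * s - #|J|.
Proof.
move=> aJ eq_cx; have gen_sub : rt_gen m s [set i | x i != c i] \subset ~: J.
  apply: bigcap_inf; apply/andP; split; first exact: aJ.
  by apply/subsetP => i; rewrite !inE; apply: contra => /eq_cx ->.
apply: leq_trans (subset_leq_card gen_sub) _.
by rewrite -(addKn #|J| #|~: J|) cardsC card_ord.
Qed.

Lemma exists_rt_anti_idealU1 (K : {set 'I_(m * s)}) :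
  rt_anti_ideal m s K -> #|K| < m * s ->
  exists2 p, p \notin K & rt_anti_ideal m s (p |: K).
Proof.
move=> /rt_anti_idealP upK K_small.
have /card_gt0P[p0] : 0 < #|~: K| by rewrite -(ltn_add2l #|K|) cardsC card_ord addn0.
rewrite inE => p0NK.
case: (@arg_maxnP _ p0 (fun p => p \notin K) val p0NK) => p pNK maxp.
exists p => //.
apply/rt_anti_idealP => i j; rewrite !inE => /predU1P[-> | iK] le_ij; last first.
  by rewrite (upK i) ?orbT.
have [jK | jNK] := boolP (j \in K); first by rewrite orbT.
have le_jp : j <= p := maxp j jNK.
by case/andP: le_ij => _ le_pj; rewrite orbF -val_eqE eqn_leq le_jp le_pj.
Qed.

Lemma rt_anti_ideal_extend (J : {set 'I_(m * s)}) t :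
  rt_anti_ideal m s J -> #|J| <= t <= m * s ->
  exists2 K : {set 'I_(m * s)}, J \subset K & rt_anti_ideal m s K && (#|K| == t).
Proof.
move=> aJ; elim: t => [|t IH] /andP[Jt tms].
  by exists J; rewrite ?subxx ?aJ -?leqn0.
have [cJ | Jt'] := eqVneq #|J| t.+1; first by exists J; rewrite ?subxx ?aJ ?cJ ?eqxx.
have [|K JK /andP[aK /eqP cK]] := IH; first by rewrite -ltnS ltn_neqAle Jt' Jt ltnW.
have [|p pNK apK] := exists_rt_anti_idealU1 aK; first by rewrite cK.
exists (p |: K); first exact: subset_trans JK (subsetU1 p K).
by rewrite apK cardsU1 pNK cK add1n eqxx.
Qed.

End RTPoset.

Lemma rt_anti_ideal_antichain n (J : {set 'I_(n * 1)}) : rt_anti_ideal n 1 J.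
Proof.
by apply/rt_anti_idealP => i j iJ /andP[]; rewrite !divn1 => /eqP/val_inj <-.
Qed.

Section BlockTops.
Variables n s : nat.

Lemma rt_block_subproof (p : 'I_(n * s.+1)) : p %/ s.+1 < n.
Proof. by rewrite ltn_divLR. Qed.

Definition rt_block (p : 'I_(n * s.+1)) : 'I_n := Ordinal (rt_block_subproof p).

Lemma rt_top_subproof (b : 'I_n) : b * s.+1 + s < n * s.+1.
Proof. by have := ltn_ord b; nia. Qed.

Definition rt_top (b : 'I_n) : 'I_(n * s.+1) := Ordinal (rt_top_subproof b).

Lemma rt_topK : cancel rt_top rt_block.
Proof. by move=> b; apply: val_inj; rewrite /= divnMDl // divn_small ?addn0. Qed.

Lemma rt_top_inj : injective rt_top.
Proof. exact: can_inj rt_topK. Qed.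

Lemma rt_le_top b (j : 'I_(n * s.+1)) : rt_le s.+1 (rt_top b) j -> j = rt_top b.
Proof.
case/andP=> /eqP blk_j le_bj; apply/val_inj/eqP; rewrite eqn_leq le_bj andbT.
have /= := congr1 val (rt_topK b); rewrite blk_j => <-.
by rewrite {1}(divn_eq j s.+1) leq_add2l -ltnS ltn_mod.
Qed.

Lemma rt_anti_ideal_tops (S : {set 'I_n}) : rt_anti_ideal n s.+1 (rt_top @: S).
Proof.
by apply/rt_anti_idealP => _ j /imsetP[b bS ->] /rt_le_top ->; apply: imset_f.
Qed.

Lemma rt_dist_tops q (S : {set 'I_n}) (x c : {ffun 'I_(n * s.+1) -> 'I_q}) :
  {in S, forall b, c (rt_top b) = x (rt_top b)} ->
  rt_dist n s.+1 q x c <= n * s.+1 - #|S|.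
Proof.
move=> eq_cx; rewrite -(card_imset S rt_top_inj).
by apply: rt_dist_anti_ideal (rt_anti_ideal_tops S) _ => _ /imsetP[b bS ->]; apply: eq_cx.
Qed.

End BlockTops.

Lemma K_RT_le_card q m s R (C : {set {ffun 'I_(m * s) -> 'I_q}}) :
  rt_covering m s q R C -> K_RT q m s R <= #|C|.
Proof.
rewrite /K_RT; case: ex_minnP => n _ min_n covC.
by apply/min_n/existsP; exists C; rewrite covC eqxx.
Qed.

Lemma OCAN_spec t m s v : has_OCA (OCAN t m s v) t m s v.
Proof. by rewrite /OCAN; case: ex_minnP. Qed.

Lemma ffun_factor {T U V : finType} {D : {pred T}} {g : T -> U} {h : T -> V} (y0 : V) :
  {in D &, forall d d', g d = g d' -> h d = h d'} ->
  exists f : {ffun U -> V}, {in D, forall d, f (g d) = h d}.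
Proof.
move=> gh; exists [ffun u => if [pick d in D | g d == u] is Some d then h d else y0].
move=> d dD; rewrite ffunE; case: pickP => [d' /andP[d'D /eqP] | /(_ d)]; first exact: gh.
by rewrite dD eqxx.
Qed.

Lemma OCA_row_factor N t n s v (A : {ffun 'I_N -> {ffun 'I_(n * s) -> 'I_v}})
    (T : finType) (D : {set T}) (g : T -> 'I_(n * s)) (h : T -> 'I_v) :
  is_OCA N t n s v A -> 0 < v ->
  rt_anti_ideal n s (g @: D) -> #|g @: D| <= t <= n * s ->
  {in D &, forall d d', g d = g d' -> h d = h d'} ->
  exists r, {in D, forall d, A r (g d) = h d}.
Proof.
move=> ocaA v_gt0 agD gDt /(ffun_factor (Ordinal v_gt0))[f fgh].
have [J gDJ aJt] := rt_anti_ideal_extend agD gDt.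
move/forallP/(_ J)/implyP: ocaA => /(_ aJt)/forallP/(_ f)/existsP[r /forall_inP Arf].
exists r => d dD; rewrite -fgh //; apply/eqP/Arf/(subsetP gDJ)/imset_f/dD.
Qed.

Lemma pigeonhole_fiber (T : finType) q (f : T -> 'I_q) t :
  q * t < #|T| -> exists k, t < #|[set x | f x == k]|.
Proof.
move=> qt_lt; case: (pickP (fun k => t < #|[set x | f x == k]|)) => [k | small].
  by exists k.
move: qt_lt; rewrite ltnNge => /negP[].
have -> : #|T| = \sum_(k < q) #|[set x | f x == k]|.
  rewrite -sum1_card (partition_big f predT) //=; apply: eq_bigr => k _.
  by rewrite -sum1_card; apply: eq_bigl => x; rewrite inE.
rewrite -[q in q * t]card_ord -sum_nat_const; apply: leq_sum => k _.
by rewrite leqNgt small.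
Qed.

Section Digits.
Variables q v : nat.

Lemma digit_join_subproof (k : 'I_q) (a : 'I_v) : k + q * a < q * v.
Proof. by have := ltn_ord k; have := ltn_ord a; nia. Qed.

Definition digit_join k a : 'I_(q * v) := Ordinal (digit_join_subproof k a).

Lemma digit_lo_subproof (y : 'I_(q * v)) : y %% q < q.
Proof. by rewrite ltn_mod; have := ltn_ord y; nia. Qed.

Definition digit_lo (y : 'I_(q * v)) : 'I_q := Ordinal (digit_lo_subproof y).

Lemma digit_hi_subproof (y : 'I_(q * v)) : y %/ q < v.
Proof.
have q_gt0 : 0 < q by have := ltn_ord y; nia.
by rewrite ltn_divLR // [v * q]mulnC.
Qed.

Definition digit_hi (y : 'I_(q * v)) : 'I_v := Ordinal (digit_hi_subproof y).

Lemma digit_joinK y : digit_join (digit_lo y) (digit_hi y) = y.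
Proof. by apply: val_inj; rewrite /= addnC mulnC -divn_eq. Qed.

Definition lift_word M (k : 'I_q) (w : {ffun 'I_M -> 'I_v}) : {ffun 'I_M -> 'I_(q * v)} :=
  [ffun p => digit_join k (w p)].

Lemma lift_word_eq M k (w : {ffun 'I_M -> 'I_v}) (x : {ffun 'I_M -> 'I_(q * v)}) p :
  digit_lo (x p) = k -> w p = digit_hi (x p) -> lift_word k w p = x p.
Proof. by move=> <- wp; rewrite ffunE wp digit_joinK. Qed.

Definition lifted_code M N (W : 'I_N -> {ffun 'I_M -> 'I_v}) :=
  [set lift_word kr.1 (W kr.2) | kr : 'I_q * 'I_N].

Lemma card_lifted_code M N (W : 'I_N -> {ffun 'I_M -> 'I_v}) :
  #|lifted_code W| <= q * N.
Proof. by apply: leq_trans (leq_imset_card _ _) _; rewrite card_prod !card_ord. Qed.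

End Digits.

Theorem K_RT_le_OCAN q v m s t :
  0 < v -> 0 < s -> (t - 1) * q < m ->
  K_RT (q * v) m s (m * s - t) <= q * OCAN t m s v.
Proof.
case: s => // s v_gt0 _ m_big; have /existsP[A ocaA] := OCAN_spec t m s.+1 v.
apply: leq_trans (card_lifted_code q A); apply: K_RT_le_card; apply/forallP => x.
pose lo b := digit_lo (x (rt_top s b)); pose hi b := digit_hi (x (rt_top s b)).
have [k] : exists k, t - 1 < #|[set b | lo b == k]|.
  by apply: pigeonhole_fiber; rewrite card_ord mulnC.
set F := [set b | lo b == k] => F_big.
have /card_geqP[bs [bs_uniq bs_t bsF]] : t <= #|F| by lia.
pose S := [set b in bs]; have cS : #|S| = t by rewrite cardsE (card_uniqP bs_uniq).
have [r Ar] : exists r, {in S, forall b, A r (rt_top s b) = hi b}.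
  apply: (OCA_row_factor ocaA v_gt0 (rt_anti_ideal_tops s S)).
    rewrite card_imset ?cS ?leqnn; last exact: rt_top_inj.
    by rewrite -cS (leq_trans (max_card _)) // card_ord leq_pmulr.
  by move=> b b' _ _ /rt_top_inj ->.
apply/existsP; exists (lift_word k (A r)); apply/andP; split.
  by apply/imsetP; exists (k, r).
apply: (leq_trans (rt_dist_tops (S := S) _)); last by rewrite cS.
move=> b bS; apply: lift_word_eq; last exact: Ar.
by move: bS; rewrite inE => /bsF; rewrite inE => /eqP.
Qed.

Lemma in3_consistent (T : finType) (U V : eqType) (g : T -> U) (h : T -> V) b1 b2 b3 :
  (g b1 = g b2 -> h b1 = h b2) -> g b3 != g b1 -> g b3 != g b2 ->
  {in [set b in [:: b1; b2; b3]] &, forall a a', g a = g a' -> h a = h a'}.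
Proof.
move=> h12 n31 n32 a a'; rewrite !inE.
do 2![case/or3P=> /eqP->] => e //.
- exact: h12.
- by move: n31; rewrite e eqxx.
- exact/esym/h12/esym.
- by move: n32; rewrite e eqxx.
- by move: n31; rewrite e eqxx.
- by move: n32; rewrite e eqxx.
Qed.

Section HalfBlocks.
Variable m : nat.

Definition upper_half (b : 'I_(2 * m)) : bool := m <= b.

Lemma half_block_subproof (b : 'I_(2 * m)) : (if upper_half b then b - m else b) < m.
Proof. by rewrite /upper_half; have := ltn_ord b; case: (leqP m b); lia. Qed.

Definition half_block (b : 'I_(2 * m)) : 'I_m := Ordinal (half_block_subproof b).

Lemma half_block_inj b b' :
  half_block b = half_block b' -> upper_half b = upper_half b' -> b = b'.
Proof.
move=> /(congr1 val) /= eq_half eq_up; apply: ord_inj; move: eq_half eq_up.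
by rewrite /upper_half; case: (leqP m b); case: (leqP m b') => // ? ? ? _; lia.
Qed.

Lemma half_block_three b1 b2 b : b1 != b2 ->
  half_block b1 = half_block b2 -> half_block b = half_block b1 -> b = b1 \/ b = b2.
Proof.
move=> n12 h12 h1; have u12 : upper_half b1 != upper_half b2.
  by apply: contra n12 => /eqP/(half_block_inj h12)->.
have [u1 | n1] := eqVneq (upper_half b) (upper_half b1).
  by left; apply: half_block_inj.
right; apply: half_block_inj; first by rewrite h1.
by move: n1 u12; case: (upper_half b) (upper_half b1) (upper_half b2) => [] [] [].
Qed.

Definition half_point (b : 'I_(2 * m)) : 'I_(m * 1) :=
  cast_ord (esym (muln1 m)) (half_block b).

End HalfBlocks.

Definition rev_if (e : bool) (a : 'I_2) : 'I_2 := if e then rev_ord a else a.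

Lemma rev_ifK e : involutive (rev_if e).
Proof. by case: e => // a; rewrite /rev_if rev_ordK. Qed.

Lemma rev_if_neq e e' a a' : e != e' -> a != a' -> rev_if e a = rev_if e' a'.
Proof.
move=> /negPf e_e'; rewrite -val_eqE => /negPf a_a'; apply: ord_inj.
have := ltn_ord a; have := ltn_ord a'; move: e_e' a_a'.
by case: e e' => [] [] //= _; lia.
Qed.

Section DoubledCode.
Variables q m s N1 N2 : nat.
Hypotheses (m_gt1 : 1 < m) (ms_ge3 : 3 <= m * s.+1).
Variables (A : {ffun 'I_N1 -> {ffun 'I_(m * s.+1) -> 'I_2}})
          (B : {ffun 'I_N2 -> {ffun 'I_(m * 1) -> 'I_2}}).
Hypotheses (ocaA : is_OCA N1 3 m s.+1 2 A) (caB : is_OCA N2 2 m 1 2 B).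

Definition fold_word (w : {ffun 'I_(m * s.+1) -> 'I_2}) :
    {ffun 'I_(2 * m * s.+1) -> 'I_2} :=
  [ffun p => w (rt_top s (half_block (rt_block p)))].

Definition twist_word (w : {ffun 'I_(m * 1) -> 'I_2}) :
    {ffun 'I_(2 * m * s.+1) -> 'I_2} :=
  [ffun p => rev_if (upper_half (rt_block p)) (w (half_point (rt_block p)))].

Definition doubled_code :=
  lifted_code q (fun r => fold_word (A r)) :|: lifted_code q (fun r => twist_word (B r)).

Lemma card_doubled_code : #|doubled_code| <= q * (N1 + N2).
Proof.
by rewrite mulnDr (leq_trans (leq_card_setU _ _)) // leq_add ?card_lifted_code.
Qed.

Definition low_digit_fiber (x : {ffun 'I_(2 * m * s.+1) -> 'I_(q * 2)}) k :=
  [set b | digit_lo (x (rt_top s b)) == k].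

Lemma doubled_code_covers3 x k b1 b2 b3 :
  let F := low_digit_fiber x k in b1 \in F -> b2 \in F -> b3 \in F ->
  b1 != b2 -> half_block b3 != half_block b1 -> half_block b3 != half_block b2 ->
  [exists c in doubled_code, rt_dist (2 * m) s.+1 (q * 2) x c <= 2 * m * s.+1 - 3].
Proof.
move=> F b1F b2F b3F n12 h31 h32; set S := [set b in [:: b1; b2; b3]].
pose hi b := digit_hi (x (rt_top s b)).
suff [c cC agree] : exists2 c, c \in doubled_code &
    {in S, forall b, c (rt_top s b) = x (rt_top s b)}.
  apply/existsP; exists c; rewrite cC (leq_trans (rt_dist_tops agree)) // leq_sub2l //.
  apply/card_gt2P; exists b1, b2, b3; rewrite !inE !eqxx ?orbT; split=> //; split=> //.
    by apply: contraNneq h32 => ->.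
  by apply: contraNneq h31 => ->.
have lo_k b : b \in S -> digit_lo (x (rt_top s b)) = k.
  by move: b1F b2F b3F; rewrite !inE => ? ? ? /or3P[] /eqP-> ; apply/eqP.
have lift_agree (w : {ffun 'I_(2 * m * s.+1) -> 'I_2}) :
    {in S, forall b, w (rt_top s b) = hi b} ->
    {in S, forall b, lift_word k w (rt_top s b) = x (rt_top s b)}.
  by move=> w_hi b bS; apply: lift_word_eq (w_hi b bS); apply: lo_k.
have [/andP[/eqP h12 n_hi12] | hi12] :=
  boolP ((half_block b1 == half_block b2) && (hi b1 != hi b2)).
  pose twisted_hi b := rev_if (upper_half b) (hi b).
  have [r Br] : exists r, {in S, forall b, B r (half_point b) = twisted_hi b}.
    apply: (OCA_row_factor caB) (rt_anti_ideal_antichain _) _ _ => //.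
      apply/andP; split; last by rewrite muln1.
      have sub2 : [set half_point b | b in S] \subset [set half_point b1; half_point b3].
        apply/subsetP => _ /imsetP[b /[!inE] /or3P[] /eqP-> ->];
          by rewrite ?eqxx ?orbT // /half_point h12 eqxx.
      by rewrite (leq_trans (subset_leq_card sub2)) // cards2; case: (_ != _).
    move=> a a' aS a'S /cast_ord_inj eq_half.
    apply: (in3_consistent (h := twisted_hi) _ h31 h32 aS a'S eq_half) => _.
    by apply: rev_if_neq n_hi12; apply: contra n12 => /eqP/(half_block_inj h12)->.
  exists (lift_word k (twist_word (B r))).
    by rewrite in_setU; apply/orP; right; apply/imsetP; exists (k, r).
  by apply: lift_agree => b bS; rewrite ffunE rt_topK Br // rev_ifK.
have [r Ar] : exists r, {in S, forall b, A r (rt_top s (half_block b)) = hi b}.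
  apply: (OCA_row_factor (g := fun b => rt_top s (half_block b)) (h := hi) ocaA) => //.
  - by rewrite (imset_comp (rt_top s) (@half_block m)); apply: rt_anti_ideal_tops.
  - by rewrite ms_ge3 andbT (leq_trans (leq_imset_card _ _)) // cardsE card_size.
  move=> a a' aS a'S /rt_top_inj eq_half.
  apply: (in3_consistent (h := hi) _ h31 h32 aS a'S eq_half) => h12.
  by move: hi12; rewrite h12 eqxx negbK => /eqP.
exists (lift_word k (fold_word (A r))).
  by rewrite in_setU; apply/orP; left; apply/imsetP; exists (k, r).
by apply: lift_agree => b bS; rewrite ffunE rt_topK Ar.
Qed.

Hypothesis q_lt_m : q < m.

Lemma doubled_code_covering :
  rt_covering (2 * m) s.+1 (q * 2) (2 * m * s.+1 - 3) doubled_code.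
Proof.
apply/forallP => x; have [k] : exists k, 2 < #|low_digit_fiber x k|.
  by apply: pigeonhole_fiber; rewrite card_ord mulnC ltn_pmul2l.
case/card_gt2P => b1 [b2 [b3 [[b1F b2F b3F] [n12 n23 n31]]]].
have [h12 | h12] := eqVneq (half_block b1) (half_block b2).
  have h31 : half_block b3 != half_block b1.
    by apply/eqP => /(half_block_three n12 h12) [] e; rewrite e eqxx in n31 n23.
  by apply: (doubled_code_covers3 b1F b2F b3F n12 h31); rewrite -h12.
have [h31 | h31] := eqVneq (half_block b3) (half_block b1).
  by apply: doubled_code_covers3 b1F b3F b2F _ _ _; rewrite // ?h31 eq_sym.
by apply: doubled_code_covers3 b3F b2F b1F _ _ _; rewrite // eq_sym.
Qed.

End DoubledCode.

Theorem K_RT_le_OCAN_CAN q m s :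
  0 < q < m -> 1 < s ->
  K_RT (2 * q) (2 * m) s (2 * m * s - 3) <= q * (OCAN 3 m s 2 + CAN 2 m 2).
Proof.
case: s => // s /andP[q_gt0 q_lt_m] s_gt1.
have /existsP[A ocaA] := OCAN_spec 3 m s.+1 2.
have /existsP[B caB] := OCAN_spec 2 m 1 2.
have m_gt1 : 1 < m by apply: leq_ltn_trans q_lt_m.
have ms_ge3 : 3 <= m * s.+1 by nia.
rewrite [2 * q]mulnC; apply: leq_trans (card_doubled_code q A B).
exact/K_RT_le_card/doubled_code_covering.
Qed.

Theorem corollary5 :
  (forall q m s : nat,
     0 < q -> q < m <= 2 * q -> (s == 2) || (s == 3) ->
     K_RT (2 * q) (2 * m) s (2 * m * s - 3) <= q * (OCAN 3 m s 2 + CAN 2 m 2))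
  /\
  (forall q v m s t : nat,
     2 <= q -> 2 <= v -> 0 < m -> 0 < s -> 0 < t ->
     2 <= t -> s <= t <= m * s ->
     (t - 1) * q + 1 <= m <= (t - 1) * q * v ->
     K_RT (q * v) m s (m * s - t) <= q * OCAN t m s v).
Proof.
split=> [q m s q_gt0 /andP[q_lt_m _] s23 | q v m s t _ v_gt1 _ s_gt0 _ _ _ /andP[m_big _]].
  by apply: K_RT_le_OCAN_CAN; rewrite ?q_gt0 //; case/orP: s23 => /eqP->.
by apply: K_RT_le_OCAN; [exact: ltnW | exact: s_gt0 | rewrite -addn1].
Qed.
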